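(* Let $n\ge2$ and let $Q$ be the $n\times n$ anti-comonotone checkerboard copula ($Q_{ij}=\frac1n$ if $i+j=n+1$, $Q_{ij}=0$ otherwise). For every $n\times n$ checkerboard copula $P\neq Q$, the function $\alpha\mapsto\tau(\alpha P+(1-\alpha)Q)$ is strictly increasing on $[0,1]$.
   Context: An $n\times n$ checkerboard copula is a real $n\times n$ matrix with nonnegative entries whose row and column sums all equal $\frac1n$. $\Xi=(\xi_{ij})$ with $\xi_{ij}=1$ if $i=j$, $2$ if $i>j$, $0$ if $i<j$. For an $n\times n$ matrix $M$, $\tau(M)=1-\mathrm{tr}(\Xi M\Xi M^\top)$ (Kendall's $\tau$ of a checkerboard copula). *)

From mathcomp Require Import all_boot all_order all_algebra.
Set Implicit Arguments. Unset Strict Implicit. Unset Printing Implicit Defensive.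
Import Order.TTheory GRing.Theory Num.Theory.
Local Open Scope ring_scope.

Definition checkerboard_copula (R : realFieldType) (n : nat) (M : 'M[R]_n) : Prop :=
  (forall i j, 0 <= M i j) /\
  (forall i, \sum_j M i j = n%:R^-1) /\
  (forall j, \sum_i M i j = n%:R^-1).

Definition Xi (R : realFieldType) (n : nat) : 'M[R]_n :=
  \matrix_(i, j) (if i == j then 1 else if (j < i)%N then 2 else 0).

Definition tau (R : realFieldType) (n : nat) (M : 'M[R]_n) : R :=
  1 - \tr (Xi R n *m M *m Xi R n *m M^T).

(* Anti-comonotone checkerboard copula: Q_ij = 1/n if i + j = n + 1 (1-based),
   i.e. i + j = n - 1 with 0-based indices, and 0 otherwise. *)
Definition anti_comonotone (R : realFieldType) (n : nat) : 'M[R]_n :=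
  \matrix_(i, j) (if (i + j == n.-1)%N then n%:R^-1 else 0).

From mathcomp Require Import all_boot all_order all_algebra.
From mathcomp Require Import zify ring lra.
Set Implicit Arguments. Unset Strict Implicit. Unset Printing Implicit Defensive.
Import Order.TTheory GRing.Theory Num.Theory.
Local Open Scope ring_scope.

(* Put D := P - Q, so that a *: P + (1 - a) *: Q = Q + a *: D and D has zero row
   and column sums.  As Xi + Xi^T is constant, the two cross terms of the quadratic
   form M |-> tr (Xi M Xi M^T) at Q + a D agree, and
     tau (Q + a D) = tau Q - 2 a u - a^2 (p - u)
   with u = <Xi D Xi, Q> and p = <Xi D Xi, P> (Frobenius products).
   Each entry of Xi D Xi is a sum of four masses of D on blocks "rows < x,
   columns >= y".  By the zero margins such a mass is minus the mass of P on the
   block "rows < x, columns < y" when x + y <= n, or "rows >= x, columns >= y" when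
   x + y >= n, because Q puts no mass there.  Hence Xi D Xi <= 0 entrywise, so
   p <= 0, and an entry of P off the antidiagonal makes an antidiagonal entry of
   Xi D Xi negative, so u < 0.  Finally
     tau (Q + b D) - tau (Q + a D) = (b - a) ((2 - a - b) (-u) + (a + b) (-p)) > 0. *)

Section XiForm.

Variables (R : realFieldType) (n : nat).
Implicit Types (M N D : 'M[R]_n).

Local Notation Xi := (Xi R n).

Definition xiform M N : R := \tr (Xi *m M *m Xi *m N^T).

Lemma tauE M : tau M = 1 - xiform M M.
Proof. by []. Qed.

Lemma xiformDl M1 M2 N : xiform (M1 + M2) N = xiform M1 N + xiform M2 N.
Proof. by rewrite /xiform mulmxDr !mulmxDl mxtraceD. Qed.

Lemma xiformZl a M N : xiform (a *: M) N = a * xiform M N.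
Proof. by rewrite /xiform -scalemxAr -!scalemxAl mxtraceZ. Qed.

Lemma xiformDr M N1 N2 : xiform M (N1 + N2) = xiform M N1 + xiform M N2.
Proof. by rewrite /xiform linearD /= mulmxDr mxtraceD. Qed.

Lemma xiformZr a M N : xiform M (a *: N) = a * xiform M N.
Proof. by rewrite /xiform linearZ /= -scalemxAr mxtraceZ. Qed.

Lemma xiformBr M N1 N2 : xiform M (N1 - N2) = xiform M N1 - xiform M N2.
Proof. by rewrite -scaleN1r xiformDr xiformZr mulN1r. Qed.

Lemma xiformE M N : xiform M N = \sum_i \sum_l (Xi *m M *m Xi) i l * N i l.
Proof.
rewrite /xiform /mxtrace; apply: eq_bigr => i _; rewrite mxE.
by apply: eq_bigr => l _; rewrite [N^T _ _]mxE.
Qed.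

Lemma tau_line M D a :
  tau (M + a *: D) = tau M - a * (xiform M D + xiform D M) - a ^+ 2 * xiform D D.
Proof.
by rewrite !tauE !(xiformDl, xiformDr, xiformZl, xiformZr) expr2; lra.
Qed.

Lemma XiE (i j : 'I_n) : Xi i j = (j < i)%:R + (j < i.+1)%:R.
Proof.
rewrite mxE ltnS -val_eqE /=.
by case: (ltngtP j i) => _; rewrite ?addr0 ?add0r.
Qed.

Lemma Xi_tr : Xi^T = const_mx 2 - Xi.
Proof.
apply/matrixP => i j; rewrite !mxE -!val_eqE /=.
by case: (ltngtP i j) => _; rewrite ?subr0 ?subrr // [2%:R]mulr2n addrK.
Qed.

End XiForm.

Section ZeroMargins.

Variables (R : realFieldType) (n : nat) (D : 'M[R]_n).
Hypothesis D_row0 : forall i, \sum_j D i j = 0.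
Hypothesis D_col0 : forall j, \sum_i D i j = 0.

Local Notation Xi := (Xi R n).

Lemma const_mx_mulmx m c : const_mx c *m D = 0 :> 'M_(m, n).
Proof.
apply/matrixP => i k; rewrite !mxE.
by under eq_bigr do rewrite mxE; rewrite -mulr_sumr D_col0 mulr0.
Qed.

Lemma mulmx_const_mx m c : D *m const_mx c = 0 :> 'M_(n, m).
Proof.
apply/matrixP => i k; rewrite !mxE.
by under eq_bigr do rewrite mxE; rewrite -mulr_suml D_row0 mul0r.
Qed.

Lemma Xi_tr_sandwich : Xi^T *m D *m Xi^T = Xi *m D *m Xi.
Proof.
rewrite Xi_tr mulmxBl const_mx_mulmx sub0r mulNmx mulmxBr -mulmxA mulmx_const_mx.
by rewrite mulmx0 sub0r opprK.
Qed.

Lemma xiform_sym M : xiform M D = xiform D M.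
Proof.
rewrite /xiform -mxtrace_tr !trmx_mul !trmxK -Xi_tr_sandwich -!mulmxA.
by rewrite [RHS]mxtrace_mulC !mulmxA.
Qed.

End ZeroMargins.

Section Blocks.

Variables (R : realFieldType) (n : nat).
Implicit Types (M N D : 'M[R]_n) (r c : pred nat) (x y : nat).

Definition block_sum M r c : R := \sum_(j < n | r j) \sum_(k < n | c k) M j k.

Definition upper_left M x y := block_sum M (fun j => j < x)%N (fun k => k < y)%N.
Definition upper_right M x y := block_sum M (fun j => j < x)%N (fun k => y <= k)%N.
Definition lower_right M x y := block_sum M (fun j => x <= j)%N (fun k => y <= k)%N.

Lemma block_sum_ge0 M r c : (forall j k, 0 <= M j k) -> 0 <= block_sum M r c.
Proof. by move=> M_ge0; do 2!apply: sumr_ge0 => ? _. Qed.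

Lemma block_sum_ge_entry M r c (j k : 'I_n) :
  (forall j k, 0 <= M j k) -> r j -> c k -> M j k <= block_sum M r c.
Proof.
move=> M_ge0 rj ck; rewrite /block_sum (bigD1 j) //= (bigD1 k) //= -addrA lerDl.
by rewrite addr_ge0 //; do ?apply: sumr_ge0 => ? _.
Qed.

Lemma upper_right_indE M x y :
  upper_right M x y = \sum_(j < n) \sum_(k < n) (j < x)%:R * M j k * (y <= k)%:R.
Proof.
rewrite /upper_right /block_sum big_mkcond; apply: eq_bigr => j _ /=.
case: (j < x)%N; last by rewrite big1 // => k _; rewrite !mul0r.
rewrite big_mkcond; apply: eq_bigr => k _ /=.
by case: (y <= k)%N; rewrite mul1r ?mulr1 ?mulr0.
Qed.

Lemma Xi_sandwichE M (i l : 'I_n) :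
  (Xi R n *m M *m Xi R n) i l = upper_right M i l + upper_right M i l.+1
                                + upper_right M i.+1 l + upper_right M i.+1 l.+1.
Proof.
rewrite !upper_right_indE mxE; under eq_bigr do rewrite mxE big_distrl /=.
rewrite exchange_big -!big_split; apply: eq_bigr => j _ /=.
rewrite -!big_split; apply: eq_bigr => k _ /=.
rewrite !XiE !ltnS; ring.
Qed.

Lemma upper_right_row0 D x y :
  (forall i, \sum_j D i j = 0) -> upper_right D x y = - upper_left D x y.
Proof.
move=> D_row0; apply/eqP; rewrite -addr_eq0 /upper_right /upper_left /block_sum.
rewrite -big_split big1 // => j _ /=.
rewrite -[in RHS](D_row0 j) [RHS](bigID (fun k : 'I_n => (y <= k)%N)) /=.
by congr (_ + _); apply: eq_bigl => k; rewrite ltnNge.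
Qed.

Lemma upper_right_col0 D x y :
  (forall j, \sum_i D i j = 0) -> upper_right D x y = - lower_right D x y.
Proof.
move=> D_col0; apply/eqP; rewrite -addr_eq0 /upper_right /lower_right /block_sum.
rewrite exchange_big [X in _ + X]exchange_big -big_split big1 // => k _ /=.
rewrite -[in RHS](D_col0 k) [RHS](bigID (fun j : 'I_n => (j < x)%N)) /=.
by congr (_ + _); apply: eq_bigl => j; rewrite leqNgt.
Qed.

Lemma block_sumB M N r c : block_sum (M - N) r c = block_sum M r c - block_sum N r c.
Proof.
rewrite /block_sum -sumrB; apply: eq_bigr => j _.
by rewrite -sumrB; apply: eq_bigr => k _; rewrite !mxE.
Qed.

End Blocks.

Section AntiComonotone.

Variables (R : realFieldType) (n : nat).
Local Notation Q := (anti_comonotone R n).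

Lemma anti_comonotoneE (j k : 'I_n) : Q j k = if k == rev_ord j then n%:R^-1 else 0.
Proof.
rewrite mxE -val_eqE /=; have := ltn_ord j; have := ltn_ord k => *.
by congr (if _ then _ else _); apply/eqP/eqP; lia.
Qed.

Lemma anti_comonotone_copula : checkerboard_copula Q.
Proof.
split; first by move=> j k; rewrite anti_comonotoneE; case: ifP; rewrite ?invr_ge0.
split=> [j|k].
  rewrite (bigD1 (rev_ord j)) //= anti_comonotoneE eqxx big1 ?addr0 // => k kj.
  by rewrite anti_comonotoneE (negbTE kj).
rewrite (bigD1 (rev_ord k)) //= anti_comonotoneE rev_ordK eqxx big1 ?addr0 // => j jk.
by rewrite anti_comonotoneE -(inj_eq rev_ord_inj) rev_ordK eq_sym (negbTE jk).
Qed.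

Lemma upper_left_anti_comonotone x y : (x + y <= n)%N -> upper_left Q x y = 0.
Proof.
move=> xy; rewrite /upper_left /block_sum big1 // => j jx; rewrite big1 // => k ky.
by rewrite mxE ifF //; apply/negbTE/eqP; lia.
Qed.

Lemma lower_right_anti_comonotone x y : (n <= x + y)%N -> lower_right Q x y = 0.
Proof.
move=> xy; rewrite /lower_right /block_sum big1 // => j jx; rewrite big1 // => k ky.
by rewrite mxE ifF //; apply/negbTE/eqP; have := ltn_ord j; lia.
Qed.

End AntiComonotone.

Lemma copula_sub_row0 (R : realFieldType) n (P N : 'M[R]_n) :
  checkerboard_copula P -> checkerboard_copula N -> forall i, \sum_j (P - N) i j = 0.
Proof.
move=> [_ [P_row _]] [_ [N_row _]] i.
by under eq_bigr do rewrite !mxE; rewrite sumrB P_row N_row subrr.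
Qed.

Lemma copula_sub_col0 (R : realFieldType) n (P N : 'M[R]_n) :
  checkerboard_copula P -> checkerboard_copula N -> forall j, \sum_i (P - N) i j = 0.
Proof.
move=> [_ [_ P_col]] [_ [_ N_col]] j.
by under eq_bigr do rewrite !mxE; rewrite sumrB P_col N_col subrr.
Qed.

Section CopulaDifference.

Variables (R : realFieldType) (n : nat) (P : 'M[R]_n).
Hypothesis P_copula : checkerboard_copula P.

Local Notation Q := (anti_comonotone R n).
Local Notation Phi := (Xi R n *m (P - Q) *m Xi R n).

Let P_ge0 : forall j k, 0 <= P j k. Proof. by case: P_copula. Qed.

Lemma upper_right_sub_anti_lo x y :
  (x + y <= n)%N -> upper_right (P - Q) x y = - upper_left P x y.
Proof.
move=> xy; rewrite upper_right_row0; last exact: copula_sub_row0 (anti_comonotone_copula _ _).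
by have := upper_left_anti_comonotone R xy; rewrite /upper_left block_sumB => ->; rewrite subr0.
Qed.

Lemma upper_right_sub_anti_hi x y :
  (n <= x + y)%N -> upper_right (P - Q) x y = - lower_right P x y.
Proof.
move=> xy; rewrite upper_right_col0; last exact: copula_sub_col0 (anti_comonotone_copula _ _).
by have := lower_right_anti_comonotone R xy; rewrite /lower_right block_sumB => ->; rewrite subr0.
Qed.

Lemma upper_right_sub_anti_le0 x y : upper_right (P - Q) x y <= 0.
Proof.
case: (leqP (x + y) n) => [/upper_right_sub_anti_lo | /ltnW/upper_right_sub_anti_hi] ->;
  by rewrite oppr_le0 block_sum_ge0.
Qed.

Lemma Phi_le0 i l : Phi i l <= 0.
Proof. by rewrite Xi_sandwichE !ler_wnDr // upper_right_sub_anti_le0. Qed.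

Lemma Phi_antidiag_le (j k : 'I_n) : k != rev_ord j -> Phi j (rev_ord j) <= - P j k.
Proof.
move=> kj; rewrite Xi_sandwichE.
have ur_le0 := upper_right_sub_anti_le0; have jn := ltn_ord j.
case: (ltngtP (j + k) n.-1) => jk.
- rewrite [upper_right _ j.+1 (rev_ord j)]upper_right_sub_anti_lo /=; last by lia.
  have Pjk : P j k <= upper_left P j.+1 (n - j.+1).
    by apply: block_sum_ge_entry P_ge0 _ _ => /=; lia.
  move: (ur_le0 j (rev_ord j)) (ur_le0 j (rev_ord j).+1) (ur_le0 j.+1 (rev_ord j).+1).
  rewrite /= => ? ? ?; lra.
- rewrite [upper_right _ j (rev_ord j).+1]upper_right_sub_anti_hi /=; last by lia.
  have Pjk : P j k <= lower_right P j (n - j.+1).+1.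
    by apply: block_sum_ge_entry P_ge0 _ _ => /=; lia.
  move: (ur_le0 j (rev_ord j)) (ur_le0 j.+1 (rev_ord j)) (ur_le0 j.+1 (rev_ord j).+1).
  rewrite /= => ? ? ?; lra.
- by move: kj; rewrite -val_eqE /=; lia.
Qed.

Lemma xiform_sub_anti_le0 : xiform (P - Q) P <= 0.
Proof.
rewrite xiformE; do 2!apply: sumr_le0 => ? _.
by rewrite mulr_le0_ge0 ?Phi_le0.
Qed.

Lemma xiform_sub_antiE : xiform (P - Q) Q = n%:R^-1 * \sum_j Phi j (rev_ord j).
Proof.
rewrite xiformE mulr_sumr; apply: eq_bigr => j _.
rewrite (bigD1 (rev_ord j)) //= big1 => [|k kj]; last first.
  by rewrite anti_comonotoneE (negbTE kj) mulr0.
by rewrite anti_comonotoneE eqxx addr0 mulrC.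
Qed.

Lemma copula_off_antidiag :
  P <> Q -> exists j k, k != rev_ord j /\ 0 < P j k.
Proof.
move=> PnQ; case: (pickP (fun jk : 'I_n * 'I_n => (jk.2 != rev_ord jk.1) && (0 < P jk.1 jk.2))).
  by move=> [j k] /andP[kj Pjk]; exists j, k.
move=> off0; exfalso; apply: PnQ.
have P_off0 j k : k != rev_ord j -> P j k = 0.
  move=> kj; apply/eqP; rewrite eq_le P_ge0 andbT leNgt.
  by have := off0 (j, k); rewrite /= kj => /negbT.
apply/matrixP => j k; rewrite anti_comonotoneE.
case: eqP => [->|/eqP]; last exact: P_off0.
have [_ [P_row _]] := P_copula; rewrite -(P_row j) (bigD1 (rev_ord j)) //= big1 ?addr0 //.
by move=> k' k'j; apply: P_off0.
Qed.

Lemma xiform_sub_anti_lt0 : P <> Q -> xiform (P - Q) Q < 0.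
Proof.
move=> /copula_off_antidiag [j [k [kj Pjk]]].
have n_gt0 : (0 < n)%N by apply: leq_ltn_trans (ltn_ord j).
rewrite xiform_sub_antiE pmulr_rlt0 ?invr_gt0 ?ltr0n //.
rewrite (bigD1 j) //=; apply: (@le_lt_trans _ _ (Phi j (rev_ord j))).
  by rewrite gerDl; apply: sumr_le0 => i _; exact: Phi_le0.
by apply: le_lt_trans (Phi_antidiag_le kj) _; rewrite oppr_lt0.
Qed.

Lemma tau_convex_anti a :
  tau (a *: P + (1 - a) *: Q) =
  tau Q - 2 * a * xiform (P - Q) Q - a ^+ 2 * (xiform (P - Q) P - xiform (P - Q) Q).
Proof.
have [D_row0 D_col0] := (copula_sub_row0 P_copula (anti_comonotone_copula R n),
                         copula_sub_col0 P_copula (anti_comonotone_copula R n)).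
by rewrite scalerBl scale1r addrCA -scalerBr tau_line xiform_sym // xiformBr; ring.
Qed.

End CopulaDifference.

Theorem lemma10 (R : realFieldType) (n : nat) (Hn : (2 <= n)%N) (P : 'M[R]_n) :
  checkerboard_copula P -> P <> anti_comonotone R n ->
  forall a b : R, 0 <= a -> a < b -> b <= 1 ->
    tau (a *: P + (1 - a) *: anti_comonotone R n) <
    tau (b *: P + (1 - b) *: anti_comonotone R n).
Proof.
move=> P_copula PnQ a b a_ge0 ab b_le1.
rewrite !(tau_convex_anti P_copula).
have u_lt0 := xiform_sub_anti_lt0 P_copula PnQ.
have p_le0 := xiform_sub_anti_le0 P_copula.
set u := xiform _ (anti_comonotone R n) in u_lt0 *.
set p := xiform _ P in p_le0 *.
have lin : 0 < (b - a) * ((2 - a - b) * - u) by rewrite !mulr_gt0 //; lra.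
have quad : 0 <= (b - a) * ((a + b) * - p) by rewrite !mulr_ge0 //; lra.
rewrite !expr2; lra.
Qed.
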